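(* Let $P,K:\mathbb{N}_0\to\mathbb{N}_0$ be a scaling with $\lim_{n\to\infty}K_n^2/P_n=0$, and let $p:\mathbb{N}_0\to[0,1]$ satisfy $p_n\sim 1-q(\theta_n)$. Then $$\frac{\mathbb{E}[T_n(\theta_n)]}{\mathbb{E}[T_n(p_n)]}\sim 1+\frac{P_n}{K_n^3}.$$
   Context: Random key graph: for positive integers $K\le P$, $\theta=(K,P)$ and $n\ge3$, each of $n$ nodes receives independently a uniformly random $K$-element subset of $\{1,\dots,P\}$; distinct nodes are adjacent iff their subsets intersect; $T_n(\theta)$ is the number of triangles in this graph. $q(\theta)=\binom{P-K}{K}/\binom{P}{K}$ if $2K\le P$ and $0$ otherwise. $T_n(p)$ is the number of triangles in the Erdős–Rényi graph $\mathbb{G}(n;p)$ (each edge present independently with probability $p$), so $\mathbb{E}[T_n(p)]=\binom n3 p^3$. A scaling is a pair $P,K:\mathbb{N}_0\to\mathbb{N}_0$ with $1\le K_n\le P_n$, and $\theta_n=(K_n,P_n)$; $a_n\sim b_n$ means $a_n/b_n\to1$. *)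

From Stdlib Require Import Reals.
From mathcomp Require Import all_boot.

Set Implicit Arguments.
Unset Strict Implicit.
Unset Printing Implicit Defensive.

(* The key pool {1,...,P} is represented by 'I_P, the nodes by 'I_n.
   A key assignment gives each node a subset of the pool; the uniform
   random K-subset model is the uniform distribution on the assignments
   in which every ring has exactly K elements (independence across nodes
   is the product structure of this set of functions). *)
Definition keyrings (n K P : nat) : {set {ffun 'I_n -> {set 'I_P}}} :=
  [set f : {ffun 'I_n -> {set 'I_P}} | [forall i, #|f i| == K]].

Definition triangles (n P : nat) (f : {ffun 'I_n -> {set 'I_P}}) : nat :=
  #|[set T : {set 'I_n} | (#|T| == 3) &&
      [forall i in T, forall j in T, (i != j) ==> (f i :&: f j != set0)]]|.

Definition sum_triangles (n K P : nat) : nat :=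
  \sum_(f in keyrings n K P) triangles f.

Local Open Scope R_scope.

(* E[T_n(theta)] for theta = (K,P): average of the triangle count over
   the uniform distribution on key assignments. *)
Definition ET_key (n K P : nat) : R :=
  INR (sum_triangles n K P) / INR #|keyrings n K P|.

Definition ET_er (n : nat) (p : R) : R := INR 'C(n, 3) * p ^ 3.

Definition q (K P : nat) : R :=
  if (2 * K <= P)%N then INR 'C(P - K, K) / INR 'C(P, K) else 0.

(** The probability that three fixed nodes form a triangle is the probability
    [t] that three independent uniform [K]-subsets of a [P]-set pairwise meet.
    By the union bound over a common key or a "cyclic" configuration of three
    distinct keys, [t <= P r^3 + P^3 r^6] with [r = K/P]; a Bonferroni argument
    shows that this is sharp up to a factor [1 - O(K^2/P)].  Similarly
    [1 - q = K^2/P (1 + O(K^2/P))].  Hence [E T_n(theta)/E T_n(p_n) = t/p_n^3]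
    and [t/(1-q)^3 = (P r^3 + P^3 r^6)(P/K^2)^3 (1 + o(1)) = (1 + P/K^3)(1 + o(1))]. *)
From Stdlib Require Import Reals Lra Psatz.
From mathcomp Require Import all_boot zify.

Set Implicit Arguments.
Unset Strict Implicit.
Unset Printing Implicit Defensive.

Lemma sum_nat_pred (T : finType) (a : pred T) : \sum_(z : T) (a z : nat) = #|[set z | a z]|.
Proof. by rewrite -sum1dep_card [RHS]big_mkcond /=; apply: eq_bigr => z _; case: (a z). Qed.

Lemma leq_sum_term (I : finType) (F : I -> nat) i : F i <= \sum_(j : I) F j.
Proof. by rewrite (bigD1 i) //= leq_addr. Qed.

Lemma sum_ord_const P c : \sum_(x : 'I_P) c = P * c.
Proof. by rewrite sum_nat_const card_ord. Qed.

Lemma subset2 (T : finType) (x y : T) (A : {set T}) :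
  ([set x; y] \subset A) = (x \in A) && (y \in A).
Proof. by rewrite subUset !sub1set. Qed.

Lemma subset3 (T : finType) (x y z : T) (A : {set T}) :
  ([set x; y; z] \subset A) = [&& x \in A, y \in A & z \in A].
Proof. by rewrite !subUset !sub1set andbA. Qed.

Lemma cards3 (T : finType) (a b c : T) :
  a != b -> b != c -> a != c -> #|[set a; b; c]| = 3.
Proof.
move=> ab bc ac; rewrite setUC cardsU1 cards2 ab !inE negb_or.
by rewrite eq_sym ac eq_sym bc.
Qed.

Lemma card_ordered_pairs (T : finType) (E : {set T}) :
  \sum_(x : T) \sum_(y : T) ((x != y) && ([set x; y] \subset E) : nat)
  = #|E| * (#|E| - 1).
Proof.
transitivity (\sum_(x : T) ((x \in E) : nat) * (#|E| - 1)).
  apply: eq_bigr => x _; case xE: (x \in E); last first.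
    by rewrite mul0n big1 // => y _; rewrite subset2 xE andbF.
  rewrite mul1n sum_nat_pred (cardsD1 x E) xE add1n subSS subn0.
  by apply: eq_card => y; rewrite !inE subset2 xE eq_sym.
by rewrite -big_distrl /= sum_nat_pred; congr (_ * _); apply: eq_card => x; rewrite inE.
Qed.

(* Second Bonferroni inequality, in the weak form m <= [m > 0] + m (m - 1). *)
Lemma card_le_nonempty_pairs (T : finType) (E : {set T}) :
  #|E| <= (E != set0) + \sum_(x : T) \sum_(y : T) ((x != y) && ([set x; y] \subset E) : nat).
Proof. by rewrite card_ordered_pairs -card_gt0; case: #|E| => //= m; nia. Qed.

Section KeyringCounting.
Variables P K : nat.
Local Notation X := {set 'I_P}.

Definition keyring (A : X) := #|A| == K.

Definition nsupsets s := if s <= K then 'C(P - s, K - s) else 0.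

Lemma card_keyring : #|[set A : X | keyring A]| = 'C(P, K).
Proof. by rewrite card_draws card_ord. Qed.

Lemma card_keyring_supsets (U : X) :
  #|U| <= K -> #|[set A : X | keyring A && (U \subset A)]| = 'C(P - #|U|, K - #|U|).
Proof.
move=> hU.
have -> : [set A : X | keyring A && (U \subset A)] =
   (fun B => B :|: U) @: [set B : X | B \subset ~: U & #|B| == K - #|U|].
  apply/setP=> A; rewrite inE /keyring; apply/andP/imsetP.
    move=> [/eqP hA hUA]; exists (A :\: U); last first.
      by rewrite setUC -{1}(setIidPr hUA) setID.
    by rewrite inE subsetDr cardsD (setIidPr hUA) hA /=.
  move=> [B]; rewrite inE => /andP[hB /eqP hcB] ->; split; last exact: subsetUr.
  have /disjoint_setI0 BU0 : [disjoint B & U] by rewrite disjoints_subset.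
  by rewrite cardsU BU0 hcB cards0 subn0 subnK.
rewrite card_in_imset ?cards_draws; first by rewrite cardsCs setCK card_ord.
move=> B1 B2; rewrite !inE => /andP[h1 _] /andP[h2 _] e.
have dj (B : X) : B \subset ~: U -> (B :|: U) :\: U = B.
  by move=> hB; rewrite setDUl setDv setU0; apply/setDidPl; rewrite disjoints_subset.
by rewrite -(dj _ h1) e dj.
Qed.

Lemma sum_keyring_supsets (U : X) :
  \sum_(A | keyring A) (U \subset A : nat) = nsupsets #|U|.
Proof.
rewrite -big_mkcondr /= sum1dep_card /nsupsets; case: ifP => hU.
  by rewrite -card_keyring_supsets.
apply/eqP; rewrite cards_eq0; apply/eqP/setP=> A; rewrite !inE /keyring.
by apply/negP=> /andP[/eqP hA /subset_leq_card]; rewrite hA hU.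
Qed.

Lemma nsupsets_ffact s : K <= P -> nsupsets s * P ^_ s = 'C(P, K) * K ^_ s.
Proof.
move=> hKP; rewrite /nsupsets; case: ifP => hs; last by rewrite [K ^_ s]ffact_small ?muln0 //; lia.
have f1 := bin_fact hKP.
have f2 : 'C(P - s, K - s) * ((K - s)`! * (P - K)`!) = (P - s)`!.
  by rewrite -(_ : (P - s) - (K - s) = P - K); [apply: bin_fact|]; lia.
have f3 := ffact_fact hs; have f4 : P ^_ s * (P - s)`! = P`! by apply: ffact_fact; lia.
apply/eqP; rewrite -(eqn_pmul2r (fact_gt0 (K - s))) -(eqn_pmul2r (fact_gt0 (P - K))).
by apply/eqP; transitivity P`!; [rewrite -f4 -f2 | rewrite -f1 -f3]; nia.
Qed.

End KeyringCounting.

Section PairwiseMeetingTriples.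
Variable P : nat.
Local Notation X := {set 'I_P}.
Implicit Types (A B C : X) (x y z w : 'I_P).

Definition pairwise_meet A B C := [&& A :&: B != set0, B :&: C != set0 & C :&: A != set0].
Definition distinct3 x y z := [&& x != y, y != z & x != z].
Definition distinct4 x y z w := distinct3 x y z && (w \notin [set x; y; z]).

(** [x], [y], [z] witness [A :&: B], [B :&: C], [C :&: A] respectively. *)
Definition cycle_config x y z A B C :=
  ([set x; z] \subset A : nat) * ([set x; y] \subset B : nat) * ([set y; z] \subset C : nat).

Definition ncommon A B C :=
  \sum_x (([set x] \subset A : nat) * ([set x] \subset B : nat) * ([set x] \subset C : nat)).
Definition ncycles A B C := \sum_x \sum_y \sum_z (distinct3 x y z * cycle_config x y z A B C).
Definition ncommon_pairs A B C := \sum_x \sum_y ((x != y) : nat) *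
  (([set x; y] \subset A : nat) * ([set x; y] \subset B : nat) * ([set x; y] \subset C : nat)).

Definition unique_cycle x y z A B C := distinct3 x y z * ((A :&: B == [set x]) : nat) *
  ((B :&: C == [set y]) : nat) * ((C :&: A == [set z]) : nat).

(* Configurations in which one of the three witnesses is not the unique point of
   its intersection: a fourth point [w], or one of [x], [y], [z] itself, lies in
   a second one of the sets. *)
Definition cycle_excess x y z A B C :=
  \sum_w (distinct4 x y z w * (([set x; z; w] \subset A : nat) * ([set x; y; w] \subset B : nat) * ([set y; z] \subset C : nat)))
+ \sum_w (distinct4 x y z w * (([set x; z] \subset A : nat) * ([set x; y; w] \subset B : nat) * ([set y; z; w] \subset C : nat)))
+ \sum_w (distinct4 x y z w * (([set x; z; w] \subset A : nat) * ([set x; y] \subset B : nat) * ([set y; z; w] \subset C : nat)))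
+ distinct3 x y z * (([set x; z; y] \subset A : nat) * ([set x; y] \subset B : nat) * ([set y; z] \subset C : nat))
+ distinct3 x y z * (([set x; z] \subset A : nat) * ([set x; y; z] \subset B : nat) * ([set y; z] \subset C : nat))
+ distinct3 x y z * (([set x; z] \subset A : nat) * ([set x; y] \subset B : nat) * ([set y; z; x] \subset C : nat)).

Definition ncycle_excess A B C := \sum_x \sum_y \sum_z cycle_excess x y z A B C.

Lemma pairwise_meet_le A B C : pairwise_meet A B C <= ncommon A B C + ncycles A B C.
Proof.
rewrite /pairwise_meet; case: (boolP [&& _, _ & _]) => [|_] //.
move=> /and3P[/set0Pn[x] /setIP[xA xB] /set0Pn[y] /setIP[yB yC] /set0Pn[z] /setIP[zC zA]].
have common v : v \in A -> v \in B -> v \in C -> 1 <= ncommon A B C + ncycles A B C.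
  move=> vA vB vC; apply: leq_trans (leq_addr _ _); apply: leq_trans (leq_sum_term _ v).
  by rewrite !sub1set vA vB vC.
case: (eqVneq x y) => [exy|nxy]; first by subst y; exact: common xA xB yC.
case: (eqVneq y z) => [eyz|nyz]; first by subst z; exact: common zA yB yC.
case: (eqVneq x z) => [exz|nxz]; first by subst z; exact: common xA xB zC.
apply: leq_trans (leq_addl _ _).
apply: leq_trans (leq_sum_term _ x); apply: leq_trans (leq_sum_term _ y).
apply: leq_trans (leq_sum_term _ z).
by rewrite /distinct3 /cycle_config nxy nyz nxz !subset2 xA zA xB yB yC zC.
Qed.

Lemma ncommon_card A B C : ncommon A B C = #|A :&: B :&: C|.
Proof.
rewrite /ncommon -sum_nat_pred; apply: eq_bigr => x _; rewrite !sub1set !inE.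
by case: (x \in A); case: (x \in B); case: (x \in C).
Qed.

Lemma ncommon_le A B C : ncommon A B C <= (A :&: B :&: C != set0) + ncommon_pairs A B C.
Proof.
suff -> : ncommon_pairs A B C =
    \sum_x \sum_y ((x != y) && ([set x; y] \subset A :&: B :&: C) : nat).
  by rewrite ncommon_card; exact: card_le_nonempty_pairs.
apply: eq_bigr => x _; apply: eq_bigr => y _; rewrite !subset2 !inE.
by case: (x != y); case: (x \in A); case: (x \in B); case: (x \in C);
   case: (y \in A); case: (y \in B); case: (y \in C).
Qed.

Lemma sum_neq0 (I : finType) (F : I -> nat) : \sum_(i : I) F i != 0 -> exists i, F i != 0.
Proof.
move=> h; case: (pickP (fun i => F i != 0)) => [i hi|none]; first by exists i.
by move: h; rewrite big1 // => i _; move: (none i) => /negbFE/eqP.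
Qed.

Lemma sum_eq_set1_le1 (E : X) : \sum_x ((E == [set x]) : nat) <= 1.
Proof.
case: (pickP (fun x => E == [set x])) => [x0 /eqP->|none]; last by rewrite big1 // => x _; rewrite none.
rewrite (eq_bigr (fun x => (x0 == x) : nat)); last first.
  by move=> x _; congr nat_of_bool; apply/eqP/eqP => [/set1_inj|->].
by rewrite sum_nat_pred (_ : [set x | x0 == x] = [set x0]) ?cards1 //; apply/setP=> x; rewrite !inE eq_sym.
Qed.

Lemma sum3_mul (T : finType) (f h k : T -> nat) :
  \sum_(x : T) \sum_(y : T) \sum_(z : T) (f x * h y * k z)
  = (\sum_(x : T) f x) * (\sum_(y : T) h y) * (\sum_(z : T) k z).
Proof.
under eq_bigr do under eq_bigr do rewrite -big_distrr /=.
under eq_bigr do rewrite -big_distrl /=.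
rewrite -big_distrl /=; congr (_ * _).
by under eq_bigr do rewrite -big_distrr /=; rewrite -big_distrl.
Qed.

(* A common point and a unique cycle exclude each other, and there is at most
   one unique cycle. *)
Lemma unique_cycle_le A B C :
  (A :&: B :&: C != set0) + \sum_x \sum_y \sum_z unique_cycle x y z A B C <= pairwise_meet A B C.
Proof.
case: (eqVneq (\sum_x \sum_y \sum_z unique_cycle x y z A B C) 0) => [->|ne].
  rewrite addn0 /pairwise_meet; case: (boolP (A :&: B :&: C != set0)) => // /set0Pn[v].
  rewrite !inE => /andP[/andP[vA vB] vC].
  by rewrite lt0b; apply/and3P; split; apply/set0Pn; exists v; rewrite inE ?vA ?vB ?vC.
have [x /sum_neq0 [y /sum_neq0 [z]]] := sum_neq0 ne.
rewrite /unique_cycle; case: (boolP (distinct3 x y z)) => // /and3P[nxy nyz nxz].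
case: (boolP (A :&: B == [set x])) => // /eqP e1.
case: (boolP (B :&: C == [set y])) => // /eqP e2.
case: (boolP (C :&: A == [set z])) => // /eqP e3 _.
have nosum : \sum_x \sum_y \sum_z unique_cycle x y z A B C <= 1.
  apply: leq_trans (_ : \sum_x \sum_y \sum_z (((A :&: B == [set x]) : nat) *
     ((B :&: C == [set y]) : nat) * ((C :&: A == [set z]) : nat)) <= 1).
    apply: leq_sum => x' _; apply: leq_sum => y' _; apply: leq_sum => z' _.
    by rewrite /unique_cycle; case: (distinct3 x' y' z'); rewrite ?mul0n ?mul1n // -!mulnA.
  rewrite sum3_mul.
  exact: (leq_mul (leq_mul (sum_eq_set1_le1 _) (sum_eq_set1_le1 _)) (sum_eq_set1_le1 _)).
have -> : A :&: B :&: C = set0.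
  apply/setP=> v; rewrite in_set0; apply/negbTE/negP.
  rewrite !inE => /andP[/andP[vA vB] vC].
  have : v \in A :&: B by rewrite inE vA vB.
  have : v \in C :&: A by rewrite inE vA vC.
  by rewrite e1 e3 !inE => /eqP -> /eqP hx; rewrite hx eqxx in nxz.
have -> : pairwise_meet A B C by rewrite /pairwise_meet e1 e2 e3 -!card_gt0 !cards1.
by rewrite eqxx add0n.
Qed.

Lemma not_set1 (E : X) x : x \in E -> E != [set x] -> exists2 w, w \in E & w != x.
Proof.
move=> xE ne; case: (pickP (fun w => (w \in E) && (w != x))) => [w /andP[]|none].
  by exists w.
move: ne; have -> : E = [set x]; last by rewrite eqxx.
apply/setP=> w; rewrite inE; case: (eqVneq w x) => [->|nwx] //.
by move: (none w); rewrite nwx andbT => ->.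
Qed.

Lemma addn6_gt0 a b c d e f :
  [|| 0 < a, 0 < b, 0 < c, 0 < d, 0 < e | 0 < f] -> 0 < a + b + c + d + e + f.
Proof. by rewrite !addn_gt0 !orbA. Qed.

(* A cycle configuration is either a unique cycle, or some intersection has a
   second point [w]; according to whether [w] is new or one of [x], [y], [z],
   one of the six terms of the excess counts it. *)
Lemma cycle_excess_gt0 x y z A B C : distinct3 x y z ->
  x \in A -> z \in A -> x \in B -> y \in B -> y \in C -> z \in C ->
  unique_cycle x y z A B C = 0 -> 0 < cycle_excess x y z A B C.
Proof.
move=> hd xA zA xB yB yC zC; move: (hd) => /and3P[nxy nyz nxz].
have d4 w : w != x -> w != y -> w != z -> distinct4 x y z w.
  by move=> a b c; rewrite /distinct4 hd !inE (negbTE a) (negbTE b) (negbTE c).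
have in_sum w (F : 'I_P -> nat) : 0 < F w -> 0 < \sum_w F w.
  by move=> hw; apply: leq_trans hw (leq_sum_term _ _).
rewrite /cycle_excess hd !subset3 !subset2 xA zA xB yB yC zC /= => nounique.
apply: addn6_gt0; rewrite !muln1 !mul1n.
have xAB : x \in A :&: B by rewrite inE xA xB.
have yBC : y \in B :&: C by rewrite inE yB yC.
have zCA : z \in C :&: A by rewrite inE zC zA.
case: (eqVneq (A :&: B) [set x]) => [e1|/(not_set1 xAB)[w /setIP[wA wB] nwx]]; last first.
  case: (eqVneq w y) => [ewy|nwy]; first by subst w; rewrite wA /= !orbT.
  case: (eqVneq w z) => [ewz|nwz]; first by subst w; rewrite wB /= !orbT.
  apply/orP; left; apply: (in_sum w).
  by rewrite d4 // !subset3 xA zA wA xB yB wB.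
case: (eqVneq (B :&: C) [set y]) => [e2|/(not_set1 yBC)[w /setIP[wB wC] nwy]]; last first.
  case: (eqVneq w x) => [ewx|nwx]; first by subst w; rewrite wC /= !orbT.
  case: (eqVneq w z) => [ewz|nwz]; first by subst w; rewrite wB /= !orbT.
  apply/orP; right; apply/orP; left; apply: (in_sum w).
  by rewrite d4 // !subset3 xB yB wB yC zC wC.
case: (eqVneq (C :&: A) [set z]) => [e3|/(not_set1 zCA)[w /setIP[wC wA] nwz]]; last first.
  case: (eqVneq w x) => [ewx|nwx]; first by subst w; rewrite wC /= !orbT.
  case: (eqVneq w y) => [ewy|nwy]; first by subst w; rewrite wA /= !orbT.
  apply/orP; right; apply/orP; right; apply/orP; left; apply: (in_sum w).
  by rewrite d4 // !subset3 xA zA wA yC zC wC.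
by move: nounique; rewrite /unique_cycle hd e1 e2 e3 !eqxx.
Qed.

Lemma cycle_config_le x y z A B C :
  distinct3 x y z * cycle_config x y z A B C <= unique_cycle x y z A B C + cycle_excess x y z A B C.
Proof.
rewrite /cycle_config !subset2; case: (boolP (distinct3 x y z)) => // hd.
case: (boolP (x \in A)) => xA //; case: (boolP (z \in A)) => zA //;
case: (boolP (x \in B)) => xB //; case: (boolP (y \in B)) => yB //;
case: (boolP (y \in C)) => yC //; case: (boolP (z \in C)) => zC //=.
case: (posnP (unique_cycle x y z A B C)) => [u0|]; last by move=> /leq_trans; apply; rewrite leq_addr.
by rewrite u0 add0n; exact: cycle_excess_gt0.
Qed.

Lemma pairwise_meet_ge A B C :
  ncommon A B C + ncycles A B C
  <= pairwise_meet A B C + ncommon_pairs A B C + ncycle_excess A B C.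
Proof.
have h2 : ncycles A B C <= \sum_x \sum_y \sum_z unique_cycle x y z A B C + ncycle_excess A B C.
  rewrite /ncycles /ncycle_excess -!big_split /=; apply: leq_sum => x _.
  rewrite -!big_split /=; apply: leq_sum => y _.
  rewrite -!big_split /=; apply: leq_sum => z _; exact: cycle_config_le.
apply: leq_trans (leq_add (ncommon_le A B C) h2) _.
have := unique_cycle_le A B C.
move: (A :&: B :&: C != set0 : nat) (\sum_x _) => c u; lia.
Qed.

End PairwiseMeetingTriples.

Section TripleSums.
Variables P K : nat.
Local Notation X := {set 'I_P}.
Local Notation keyring := (@keyring P K).
Local Notation N s := (nsupsets P K s).
Local Notation "\sum3 F" := (\sum_(A | keyring A) \sum_(B | keyring B) \sum_(C | keyring C) F A B C)
  (at level 41, F at level 0).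

Lemma sum3_keyring_mul (f h k : X -> nat) :
  \sum3 (fun A B C => f A * h B * k C)
  = (\sum_(A | keyring A) f A) * (\sum_(B | keyring B) h B) * (\sum_(C | keyring C) k C).
Proof.
under eq_bigr do under eq_bigr do rewrite -big_distrr /=.
under eq_bigr do rewrite -big_distrl /=.
rewrite -big_distrl /=; congr (_ * _).
by under eq_bigr do rewrite -big_distrr /=; rewrite -big_distrl.
Qed.

Lemma sum3_keyring_exchange (I : finType) (F : I -> X -> X -> X -> nat) :
  \sum3 (fun A B C => \sum_(i : I) F i A B C)
  = \sum_(i : I) \sum3 (F i).
Proof.
under eq_bigr do under eq_bigr do rewrite exchange_big /=.
by under eq_bigr do rewrite exchange_big /=; rewrite exchange_big.
Qed.

Lemma sum3_keyring_split (F H : X -> X -> X -> nat) :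
  \sum3 (fun A B C => F A B C + H A B C) = \sum3 F + \sum3 H.
Proof.
rewrite -big_split /=; apply: eq_bigr => A _.
by rewrite -big_split /=; apply: eq_bigr => B _; rewrite -big_split.
Qed.

Lemma leq_sum3_keyring (F H : X -> X -> X -> nat) :
  (forall A B C, F A B C <= H A B C) -> \sum3 F <= \sum3 H.
Proof.
by move=> h; apply: leq_sum => A _; apply: leq_sum => B _; apply: leq_sum => C _.
Qed.

Lemma sum3_keyring_mull c (F : X -> X -> X -> nat) :
  \sum3 (fun A B C => c * F A B C) = c * \sum3 F.
Proof.
rewrite big_distrr /=; apply: eq_bigr => A _.
by rewrite big_distrr /=; apply: eq_bigr => B _; rewrite big_distrr.
Qed.

Lemma sum3_keyring_subsets (U V W : X) :
  \sum3 (fun A B C => ((U \subset A) : nat) * ((V \subset B) : nat) * ((W \subset C) : nat))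
  = N #|U| * N #|V| * N #|W|.
Proof. by rewrite sum3_keyring_mul !sum_keyring_supsets. Qed.

Lemma sum3_keyring_subsets_le (b : bool) (U V W : X) c :
  (b -> N #|U| * N #|V| * N #|W| = c) ->
  \sum3 (fun A B C => b * (((U \subset A) : nat) * ((V \subset B) : nat) * ((W \subset C) : nat))) <= c.
Proof.
rewrite sum3_keyring_mull sum3_keyring_subsets.
by case: b => [->|_]; rewrite ?mul1n ?mul0n.
Qed.

Lemma sum3_keyring_subsets_sum_le (d : 'I_P -> bool) (U V W : 'I_P -> X) c :
  (forall w, d w -> N #|U w| * N #|V w| * N #|W w| = c) ->
  \sum3 (fun A B C => \sum_(w : 'I_P)
     (d w * (((U w \subset A) : nat) * ((V w \subset B) : nat) * ((W w \subset C) : nat)))) <= P * c.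
Proof.
move=> h; rewrite sum3_keyring_exchange -sum_ord_const; apply: leq_sum => w _.
exact: sum3_keyring_subsets_le (h w).
Qed.

Definition npairwise_meet := \sum3 (fun A B C => (pairwise_meet A B C : nat)).

Lemma sum3_keyring_exchange3 (F : 'I_P -> 'I_P -> 'I_P -> X -> X -> X -> nat) :
  \sum3 (fun A B C => \sum_x \sum_y \sum_z F x y z A B C)
  = \sum_x \sum_y \sum_z \sum3 (F x y z).
Proof.
rewrite sum3_keyring_exchange; apply: eq_bigr => x _.
by rewrite sum3_keyring_exchange; apply: eq_bigr => y _; rewrite sum3_keyring_exchange.
Qed.

Lemma sum_ncommon : \sum3 (@ncommon P) = P * N 1 ^ 3.
Proof.
rewrite sum3_keyring_exchange -sum_ord_const; apply: eq_bigr => x _.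
by rewrite sum3_keyring_subsets cards1 !expnS expn0 muln1 mulnA.
Qed.

Lemma card_distinct3 : \sum_(x : 'I_P) \sum_(y : 'I_P) \sum_(z : 'I_P) (distinct3 x y z : nat)
  = P * ((P - 1) * (P - 2)).
Proof.
transitivity (\sum_(x : 'I_P) \sum_(y : 'I_P) ((x != y) : nat) * (P - 2)).
  apply: eq_bigr => x _; apply: eq_bigr => y _.
  case: (eqVneq x y) => [<-|nxy]; first by rewrite mul0n big1 // => z _; rewrite /distinct3 eqxx.
  rewrite mul1n sum_nat_pred.
  have -> : [set z | distinct3 x y z] = ~: [set x; y].
    apply/setP=> z; rewrite !inE /distinct3 nxy /= (eq_sym y z) (eq_sym x z).
    by case: (z == x); case: (z == y).
  by rewrite cardsCs setCK card_ord cards2 nxy.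
rewrite -sum_ord_const; apply: eq_bigr => x _.
rewrite -big_distrl /= sum_nat_pred (_ : #|[set y | x != y]| = P - 1) //.
have -> : [set y | x != y] = [set: 'I_P] :\ x by apply/setP=> y; rewrite !inE andbT eq_sym.
by rewrite -[P in RHS](card_ord P) -cardsT (cardsD1 x [set: _]) inE add1n subSS subn0.
Qed.

Lemma sum_ncycles : \sum3 (@ncycles P) = P * ((P - 1) * (P - 2)) * N 2 ^ 3.
Proof.
rewrite sum3_keyring_exchange3 -card_distinct3 big_distrl /=; apply: eq_bigr => x _.
rewrite big_distrl /=; apply: eq_bigr => y _.
rewrite big_distrl /=; apply: eq_bigr => z _.
rewrite sum3_keyring_mull sum3_keyring_subsets.
case: (boolP (distinct3 x y z)) => [/and3P[a b c]|]; last by rewrite !mul0n.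
by rewrite !cards2 a b c /= !mul1n !expnS expn0 muln1 mulnA.
Qed.

Lemma sum_ncommon_pairs : \sum3 (@ncommon_pairs P) <= P * (P * N 2 ^ 3).
Proof.
rewrite sum3_keyring_exchange -sum_ord_const; apply: leq_sum => x _.
rewrite sum3_keyring_exchange -sum_ord_const; apply: leq_sum => y _.
apply: sum3_keyring_subsets_le => nxy.
by rewrite !cards2 nxy !expnS expn0 muln1 mulnA.
Qed.

Local Ltac eq_sym_hyps := repeat match goal with H : is_true (?u != ?v) |- _ =>
  lazymatch goal with
  | _ : is_true (v != u) |- _ => fail
  | _ => have := H; rewrite eq_sym => ?
  end end.

(* Computes [#|[set ...]|] for pairwise distinct points, whichever way round
   the disequalities are given. *)
Local Ltac card_of_distinct := eq_sym_hyps; rewrite ?cards3 // ?cards2;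
  repeat match goal with H : is_true (?u != ?v) |- context[?u != ?v] => rewrite H end.

Lemma sum_ncycle_excess : \sum3 (@ncycle_excess P)
   <= P * (P * (P * (P * (N 3 * N 3 * N 2) + P * (N 2 * N 3 * N 3) + P * (N 3 * N 2 * N 3)
        + N 3 * N 2 * N 2 + N 2 * N 3 * N 2 + N 2 * N 2 * N 3))).
Proof.
rewrite sum3_keyring_exchange3 -sum_ord_const; apply: leq_sum => x _.
rewrite -sum_ord_const; apply: leq_sum => y _.
rewrite -sum_ord_const; apply: leq_sum => z _.
rewrite /cycle_excess !sum3_keyring_split.
have distinct w : distinct4 x y z w -> [/\ [/\ x != y, y != z & x != z], w != x, w != y & w != z].
  rewrite /distinct4 /distinct3 => /andP[/and3P[-> -> ->]].
  by rewrite !inE !negb_or => /andP[/andP[-> ->] ->].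
repeat apply: leq_add.
- by apply: sum3_keyring_subsets_sum_le => w /distinct[[a b c] d e f]; card_of_distinct.
- by apply: sum3_keyring_subsets_sum_le => w /distinct[[a b c] d e f]; card_of_distinct.
- by apply: sum3_keyring_subsets_sum_le => w /distinct[[a b c] d e f]; card_of_distinct.
- by apply: sum3_keyring_subsets_le => /and3P[a b c]; card_of_distinct.
- by apply: sum3_keyring_subsets_le => /and3P[a b c]; card_of_distinct.
- by apply: sum3_keyring_subsets_le => /and3P[a b c]; card_of_distinct.
Qed.

Lemma npairwise_meet_le : npairwise_meet <= P * N 1 ^ 3 + P * ((P - 1) * (P - 2)) * N 2 ^ 3.
Proof.
rewrite -sum_ncommon -sum_ncycles -sum3_keyring_split.
exact: leq_sum3_keyring (@pairwise_meet_le P).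
Qed.

Lemma npairwise_meet_ge :
  P * N 1 ^ 3 + P * ((P - 1) * (P - 2)) * N 2 ^ 3 <= npairwise_meet + P * (P * N 2 ^ 3) +
   P * (P * (P * (P * (N 3 * N 3 * N 2) + P * (N 2 * N 3 * N 3) + P * (N 3 * N 2 * N 3)
        + N 3 * N 2 * N 2 + N 2 * N 3 * N 2 + N 2 * N 2 * N 3))).
Proof.
rewrite -sum_ncommon -sum_ncycles -sum3_keyring_split.
apply: leq_trans (leq_sum3_keyring (@pairwise_meet_ge P)) _.
rewrite !sum3_keyring_split; apply: leq_add; last exact: sum_ncycle_excess.
by apply: leq_add => //; exact: sum_ncommon_pairs.
Qed.

Definition nmeeting (A0 : X) := \sum_(B | keyring B) ((B :&: A0 != set0) : nat).

Lemma binomial_add_nmeeting (A0 : X) : #|A0| = K ->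
  'C(P - K, K) + nmeeting A0 = 'C(P, K).
Proof.
move=> hA0.
have -> : 'C(P - K, K) = \sum_(B | keyring B) ((B \subset ~: A0) : nat).
  rewrite -big_mkcondr /= sum1dep_card -hA0.
  have -> : P - #|A0| = #|~: A0| by rewrite [#|~: A0|]cardsCs setCK card_ord.
  rewrite -cards_draws.
  by apply: eq_card => B; rewrite !inE /keyring hA0 andbC.
rewrite -big_split /= -card_keyring -sum1dep_card; apply: eq_bigr => B _.
by rewrite -disjoints_subset -setI_eq0; case: (B :&: A0 == set0).
Qed.

Lemma nmeeting_le (A0 : X) : #|A0| = K -> nmeeting A0 <= K * N 1.
Proof.
move=> hA0.
apply: leq_trans (_ : \sum_(B | keyring B) \sum_x ((x \in A0) * ([set x] \subset B)) <= _).
  apply: leq_sum => B _; case: (boolP (B :&: A0 != set0)) => // /set0Pn[x /setIP[xB xA]].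
  by apply: leq_trans (leq_sum_term _ x); rewrite xA sub1set xB.
rewrite exchange_big /=.
under eq_bigr do rewrite -big_distrr /= sum_keyring_supsets cards1.
rewrite -big_distrl /= sum_nat_pred (_ : [set x | x \in A0] = A0) ?hA0 //.
by apply/setP=> x; rewrite inE.
Qed.

Lemma nmeeting_ge (A0 : X) : #|A0| = K -> K * N 1 <= nmeeting A0 + K * K * N 2.
Proof.
move=> hA0.
have in_A0 : [set x | x \in A0] = A0 by apply/setP=> y; rewrite inE.
have single : K * N 1 = \sum_(B | keyring B) \sum_x ((x \in A0) * ([set x] \subset B)).
  rewrite exchange_big /=.
  under eq_bigr do rewrite -big_distrr /= sum_keyring_supsets cards1.
  by rewrite -big_distrl /= sum_nat_pred in_A0 hA0.
have pairs : \sum_(B | keyring B) \sum_x \sum_y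
    (((x != y) && (x \in A0) && (y \in A0)) * ([set x; y] \subset B)) <= K * K * N 2.
  rewrite exchange_big /=.
  apply: leq_trans (_ : \sum_x \sum_y (((x \in A0) && (y \in A0)) * N 2) <= _).
    apply: leq_sum => x _; rewrite exchange_big /=; apply: leq_sum => y _.
    rewrite -big_distrr /= sum_keyring_supsets; case: (eqVneq x y) => //= nxy.
    by rewrite cards2 nxy.
  have row x : \sum_y (((x \in A0) && (y \in A0)) * N 2) = (x \in A0) * (K * N 2).
    case: (x \in A0) => /=; last by rewrite big1.
    by rewrite -big_distrl /= sum_nat_pred in_A0 hA0 mul1n.
  under eq_bigr do rewrite row.
  by rewrite -big_distrl /= sum_nat_pred in_A0 hA0 mulnA.
rewrite single; apply: leq_trans (leq_add (leqnn _) pairs); rewrite -big_split /=.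
apply: leq_sum => B _.
have -> : \sum_x ((x \in A0) * ([set x] \subset B)) = #|B :&: A0|.
  transitivity #|[set x | (x \in A0) && (x \in B)]|; last by apply: eq_card => x; rewrite !inE andbC.
  by rewrite -sum_nat_pred; apply: eq_bigr => x _; rewrite sub1set; case: (x \in A0); case: (x \in B).
apply: leq_trans (card_le_nonempty_pairs _) _; rewrite leq_add2l; apply/eq_leq.
apply: eq_bigr => x _; apply: eq_bigr => y _; rewrite !subset2 !inE.
by case: (x != y); case: (x \in A0); case: (x \in B); case: (y \in A0); case: (y \in B).
Qed.

End TripleSums.

Lemma card_ffun_family n (Y : finType) (F : 'I_n -> pred Y) :
  #|[set f : {ffun 'I_n -> Y} | [forall x, f x \in F x]]| = \prod_(x : 'I_n) #|F x|.
Proof.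
rewrite (eq_card (B := family F)); last by move=> f; rewrite inE; apply/forallP/familyP.
by rewrite card_family foldrE big_map big_enum.
Qed.

Lemma card_keyrings n K P : #|keyrings n K P| = 'C(P, K) ^ n.
Proof.
rewrite (_ : keyrings n K P = [set f : {ffun 'I_n -> {set 'I_P}} | [forall x, f x \in [pred s : {set 'I_P} | #|s| == K]]]).
  rewrite card_ffun_family (eq_bigr (fun _ => 'C(P, K))) ?prod_nat_const ?card_ord // => x _.
  by rewrite -(card_keyring P K); apply: eq_card => s; rewrite !inE.
by apply/setP=> f; rewrite !inE.
Qed.

Section FixedNodes.
Variables (n P K : nat).
Local Notation X := {set 'I_P}.
Local Notation keyring := (@keyring P K).
Variables i j k : 'I_n.
Hypotheses (nij : i != j) (njk : j != k) (nik : i != k).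

Lemma card_keyrings_fix3 (a b c : X) :
  #|[set f : {ffun 'I_n -> X} | (f \in keyrings n K P) && (f i == a) && (f j == b) && (f k == c)]|
  = keyring a * keyring b * keyring c * 'C(P, K) ^ (n - 3).
Proof.
pose F x := [pred s : X | keyring s && ((x == i) ==> (s == a)) && ((x == j) ==> (s == b))
                                   && ((x == k) ==> (s == c))].
have -> : [set f : {ffun 'I_n -> X} | (f \in keyrings n K P) && (f i == a) && (f j == b) && (f k == c)]
        = [set f : {ffun 'I_n -> X} | [forall x, f x \in F x]].
  apply/setP=> f; rewrite !inE; apply/idP/forallP.
    move=> /andP[/andP[/andP[/forallP h /eqP ha] /eqP hb] /eqP hc] x.
    rewrite inE /= /keyring h.
    by rewrite andTb -!andbA; apply/and3P; split; apply/implyP => /eqP ->; apply/eqP.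
  move=> h; rewrite -!andbA; apply/and4P; split.
  - by apply/forallP => x; move: (h x); rewrite inE /= => /andP[/andP[/andP[]]].
  - by move: (h i); rewrite inE /= eqxx => /andP[/andP[/andP[_]]].
  - by move: (h j); rewrite inE /= eqxx => /andP[/andP[_]].
  - by move: (h k); rewrite inE /= eqxx => /andP[_].
have card_single (s : X) : #|[pred t : X | (t == s) && keyring t]| = keyring s.
  case: (boolP (keyring s)) => h.
    rewrite (eq_card (B := pred1 s)) ?card1 // => t /=; rewrite !inE /=.
    by case: (eqVneq t s) => [->|]; rewrite ?h.
  by apply: eq_card0 => t; rewrite !inE /=; case: (eqVneq t s) => [->|] //=; rewrite (negbTE h).
have nji : j != i by rewrite eq_sym.
have nki : k != i by rewrite eq_sym.
have nkj : k != j by rewrite eq_sym.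
have cardF x : #|F x| = if x == i then (keyring a : nat) else if x == j then (keyring b : nat)
                        else if x == k then (keyring c : nat) else 'C(P, K).
  case: (eqVneq x i) => [->|xi].
    rewrite -card_single; apply: eq_card => s; rewrite !inE /= eqxx (negbTE nij) (negbTE nik) /=.
    by rewrite !andbT andbC.
  case: (eqVneq x j) => [->|xj].
    rewrite -card_single; apply: eq_card => s; rewrite !inE /= eqxx (negbTE nji) (negbTE njk) /=.
    by rewrite !andbT andbC.
  case: (eqVneq x k) => [->|xk].
    rewrite -card_single; apply: eq_card => s; rewrite !inE /= eqxx (negbTE nki) (negbTE nkj) /=.
    by rewrite !andbT andbC.
  rewrite -(card_keyring P K); apply: eq_card => s.
  by rewrite !inE /= (negbTE xi) (negbTE xj) (negbTE xk) /= !andbT.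
rewrite card_ffun_family (eq_bigr _ (fun x _ => cardF x)).
rewrite (bigD1 i) //= eqxx (bigD1 j) //= eqxx (negbTE nji).
rewrite (bigD1 k) /=; last by rewrite nki nkj.
rewrite eqxx (negbTE nki) (negbTE nkj) (eq_bigr (fun _ => 'C(P, K))); last first.
  by move=> x /andP[/andP[xi xj] xk]; rewrite (negbTE xi) (negbTE xj) (negbTE xk).
rewrite prod_nat_const !mulnA; congr (_ * _ ^ _).
have := cardsC [set i; j; k]; rewrite cards3 // card_ord => /(canRL (addKn 3)) <-.
by apply: eq_card => x; rewrite !inE /= !negb_or.
Qed.

Lemma sum_keyrings_fix3 (h : X -> X -> X -> nat) :
  \sum_(f in keyrings n K P) h (f i) (f j) (f k)
  = 'C(P, K) ^ (n - 3) * \sum_(a | keyring a) \sum_(b | keyring b) \sum_(c | keyring c) h a b c.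
Proof.
have sum_eq (u : X) (F : X -> nat) : \sum_a ((u == a) * F a) = F u.
  by rewrite (bigD1 u) //= eqxx mul1n big1 ?addn0 // => a /negbTE; rewrite eq_sym => ->.
have split_value (f : {ffun 'I_n -> X}) : h (f i) (f j) (f k)
    = \sum_a \sum_b \sum_c ((f i == a) && (f j == b) && (f k == c)) * h a b c.
  transitivity (\sum_a ((f i == a) * \sum_b ((f j == b) * \sum_c ((f k == c) * h a b c)))).
    by rewrite sum_eq sum_eq sum_eq.
  apply: eq_bigr => a _; rewrite big_distrr /=; apply: eq_bigr => b _.
  rewrite mulnA mulnb big_distrr /=; apply: eq_bigr => c _.
  by rewrite mulnA mulnb.
under eq_bigr do rewrite split_value.
rewrite exchange_big /=; under eq_bigr do rewrite exchange_big /=.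
under eq_bigr do under eq_bigr do rewrite exchange_big /=.
have term a b c : \sum_(f in keyrings n K P) ((f i == a) && (f j == b) && (f k == c)) * h a b c
    = 'C(P, K) ^ (n - 3) * (keyring a * (keyring b * (keyring c * h a b c))).
  rewrite -big_distrl /= -big_mkcondr sum1dep_card /=.
  have -> : #|[set f in keyrings n K P | (f i == a) && (f j == b) && (f k == c)]|
      = keyring a * keyring b * keyring c * 'C(P, K) ^ (n - 3).
    by rewrite -card_keyrings_fix3; apply: eq_card => f; rewrite !inE !andbA.
  by move: (keyring a : nat) (keyring b : nat) (keyring c : nat) (h a b c) => ? ? ? ?; nia.
under eq_bigr do under eq_bigr do under eq_bigr do rewrite term.
rewrite big_distrr /= [RHS]big_mkcond /=; apply: eq_bigr => a _.
case: (keyring a); last by rewrite big1 // => b _; rewrite big1 // => c _; rewrite mul0n muln0.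
rewrite big_distrr /= [RHS]big_mkcond /=; apply: eq_bigr => b _.
case: (keyring b); last by rewrite big1 // => c _; rewrite mul0n mul1n muln0.
rewrite big_distrr /= [RHS]big_mkcond /=; apply: eq_bigr => c _.
by case: (keyring c); rewrite /= ?mul1n ?mul0n ?muln0.
Qed.

End FixedNodes.

Lemma cards3P (T : finType) (S : {set T}) : #|S| == 3 ->
  exists i j k, [/\ i != j, j != k, i != k & S = [set i; j; k]].
Proof.
move=> /eqP h3; have /card_gt0P[i iS] : 0 < #|S| by rewrite h3.
have /cards2P[j [k [njk e]]] : #|S :\ i| == 2.
  by move: h3; rewrite (cardsD1 i S) iS add1n => -[->].
have : i \notin S :\ i by rewrite !inE eqxx.
rewrite e !inE negb_or => /andP[nij nik].
exists i, j, k; split => //.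
by apply/setP=> x; rewrite -(setD1K iS) e !inE orbA.
Qed.

Lemma triangle_pairwise_meet n P (f : {ffun 'I_n -> {set 'I_P}}) (i j k : 'I_n) :
  i != j -> j != k -> i != k ->
  [forall x in [set i; j; k], forall y in [set i; j; k], (x != y) ==> (f x :&: f y != set0)]
  = pairwise_meet (f i) (f j) (f k).
Proof.
move=> ij jk ik; apply/idP/idP.
  move=> /forallP H.
  have meet x y : x \in [set i; j; k] -> y \in [set i; j; k] -> x != y -> f x :&: f y != set0.
    by move=> xT yT nxy; move: (H x); rewrite xT /= => /forallP /(_ y); rewrite yT nxy.
  by apply/and3P; split; apply: meet; rewrite ?inE ?eqxx ?orbT // eq_sym.
move=> /and3P[h1 h2 h3]; apply/forallP=> x; apply/implyP => xT; apply/forallP => y.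
apply/implyP => yT; apply/implyP => nxy.
move: xT yT; rewrite !inE => /orP[/orP[]|] /eqP ex /orP[/orP[]|] /eqP ey; subst x y;
  by rewrite ?eqxx // setIC in nxy *.
Qed.

Lemma sum_triangles_eq n K P :
  sum_triangles n K P = 'C(n, 3) * ('C(P, K) ^ (n - 3) * npairwise_meet P K).
Proof.
rewrite /sum_triangles; under eq_bigr do rewrite /triangles -sum_nat_pred.
rewrite exchange_big /=.
transitivity (\sum_(T : {set 'I_n}) ((#|T| == 3) : nat) * ('C(P, K) ^ (n - 3) * npairwise_meet P K)).
  apply: eq_bigr => T _; case: (boolP (#|T| == 3)) => h3; last first.
    by rewrite big1 // => f _; rewrite (negbTE h3).
  have [i [j [k [ij jk ik ->]]]] := cards3P h3.
  rewrite mul1n -(sum_keyrings_fix3 _ ij jk ik (fun a b c => (pairwise_meet a b c : nat))).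
  by apply: eq_bigr => f _; rewrite /= triangle_pairwise_meet.
by rewrite -big_distrl /= sum_nat_pred card_draws card_ord.
Qed.
Local Open Scope R_scope.

Section Estimates.
Variables p r : R.
Hypotheses (hp : 20 <= p) (hr : 0 < r) (hpr : 1 <= p * r) (hsmall : 20 * p * r ^ 2 <= 1).

Let a := p * r ^ 3.
Let b := p ^ 3 * r ^ 6.
Let lam := p * r ^ 2.

Lemma a_gt0 : 0 < a.
Proof. by apply: Rmult_lt_0_compat; [lra | apply: pow_lt]. Qed.

Lemma b_gt0 : 0 < b.
Proof. by apply: Rmult_lt_0_compat; apply: pow_lt; lra. Qed.

Lemma lam_gt0 : 0 < lam.
Proof. by apply: Rmult_lt_0_compat; [lra | apply: pow_lt]. Qed.

Lemma r_le_lam : r <= lam.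
Proof. unfold lam; nra. Qed.

Lemma pairs_term_le y2 : 0 <= y2 <= r ^ 2 -> p * (p * y2 ^ 3) <= b * lam.
Proof.
move=> [h0 h1].
have hy : y2 ^ 3 <= r ^ 6 by rewrite (_ : r ^ 6 = (r ^ 2) ^ 3); [apply: pow_incr | ring].
have hb : b * lam = p * (p * r ^ 6) * (p * (p * r ^ 2)) by unfold b, lam; ring.
have h2 : 1 <= p * (p * r ^ 2) by nra.
have h6 : 0 <= p * (p * r ^ 6) by apply: Rmult_le_pos; [lra | apply: Rmult_le_pos; [lra | apply: pow_le; lra]].
rewrite hb; nra.
Qed.

Lemma excess_term_le y2 y3 : 0 <= y2 <= r ^ 2 -> 0 <= y3 <= r ^ 3 ->
  p * (p * (p * (p * (y3 * y3 * y2) + p * (y2 * y3 * y3) + p * (y3 * y2 * y3)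
    + y3 * y2 * y2 + y2 * y3 * y2 + y2 * y2 * y3))) <= 3 * (b * lam) + 3 * (b * r).
Proof.
move=> [h20 h21] [h30 h31].
have e1 : y3 * y3 * y2 <= r ^ 3 * r ^ 3 * r ^ 2.
  apply: Rmult_le_compat; [nra | lra | | lra]; apply: Rmult_le_compat; lra.
have e2 : y3 * y2 * y2 <= r ^ 3 * r ^ 2 * r ^ 2.
  apply: Rmult_le_compat; [nra | lra | | lra]; apply: Rmult_le_compat; lra.
have -> : 3 * (b * lam) + 3 * (b * r)
    = p ^ 3 * (3 * p * (r ^ 3 * r ^ 3 * r ^ 2) + 3 * (r ^ 3 * r ^ 2 * r ^ 2)) by unfold b, lam; ring.
have -> : p * (p * (p * (p * (y3 * y3 * y2) + p * (y2 * y3 * y3) + p * (y3 * y2 * y3)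
    + y3 * y2 * y2 + y2 * y3 * y2 + y2 * y2 * y3)))
    = p ^ 3 * (3 * p * (y3 * y3 * y2) + 3 * (y3 * y2 * y2)) by ring.
apply: Rmult_le_compat_l; first by apply: pow_le; lra.
apply: Rplus_le_compat; apply: Rmult_le_compat_l; nra.
Qed.

Lemma cycle_term_le y2 : 0 <= y2 <= r ^ 2 -> p * ((p - 1) * (p - 2)) * y2 ^ 3 <= b.
Proof.
move=> [h0 h1].
have hy : y2 ^ 3 <= r ^ 6 by rewrite (_ : r ^ 6 = (r ^ 2) ^ 3); [apply: pow_incr | ring].
have hy0 : 0 <= y2 ^ 3 by apply: pow_le.
have hpp : 0 <= p * ((p - 1) * (p - 2)) <= p ^ 3 by split; nra.
rewrite /b; apply: Rle_trans (_ : p ^ 3 * y2 ^ 3 <= _); first by apply: Rmult_le_compat_r; lra.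
by apply: Rmult_le_compat_l; [apply: pow_le | ]; lra.
Qed.

(* With [k = p r]: [p(p-1)(p-2) >= p^3 - 3p^2] and [(k-1)^3 >= k^3 - 3k^2]. *)
Lemma cycle_term_ge y2 : r * (p * r - 1) / p <= y2 ->
  b - 3 * (a * lam) - 3 * (b * lam) <= p * ((p - 1) * (p - 2)) * y2 ^ 3.
Proof.
move=> hy2; set k := p * r in hy2 *.
have hk1 : 0 <= k - 1 by rewrite /k; lra.
have hy3 : (r * (k - 1) / p) ^ 3 <= y2 ^ 3.
  by apply: pow_incr; split => //; apply: Rmult_le_pos; [nra | apply/Rlt_le/Rinv_0_lt_compat; lra].
have hcube : k ^ 3 - 3 * k ^ 2 <= (k - 1) ^ 3 by nra.
have hcube0 : 0 <= (k - 1) ^ 3 by apply: pow_le.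
have hpoly : 0 <= p ^ 3 - 3 * p ^ 2 <= p * ((p - 1) * (p - 2)) by split; nra.
have hr3 : 0 < r ^ 3 / p ^ 3 by apply: Rdiv_lt_0_compat; apply: pow_lt; lra.
apply: Rle_trans (_ : (p ^ 3 - 3 * p ^ 2) * (k ^ 3 - 3 * k ^ 2) * (r ^ 3 / p ^ 3) <= _).
  have -> : (p ^ 3 - 3 * p ^ 2) * (k ^ 3 - 3 * k ^ 2) * (r ^ 3 / p ^ 3)
      = b - 3 * (a * lam) - 3 * (b / p) + 9 * (a * lam) / p by unfold k, a, b, lam; field; lra.
  have hbl : b / p <= b * lam.
    have hb := b_gt0.
    have hpl : 1 <= p * lam by unfold lam; nra.
    apply: (Rmult_le_reg_r p); first lra.
    have -> : b / p * p = b by field; lra.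
    nra.
  have : 0 <= 9 * (a * lam) / p.
    by apply: Rmult_le_pos; [have := a_gt0; have := lam_gt0; nra | apply/Rlt_le/Rinv_0_lt_compat; lra].
  lra.
apply: Rle_trans (_ : p * ((p - 1) * (p - 2)) * ((r * (k - 1) / p) ^ 3) <= _); last first.
  by apply: Rmult_le_compat_l; lra.
have -> : p * ((p - 1) * (p - 2)) * (r * (k - 1) / p) ^ 3
    = p * ((p - 1) * (p - 2)) * (k - 1) ^ 3 * (r ^ 3 / p ^ 3) by field; lra.
apply: Rmult_le_compat_r; first lra.
apply: Rle_trans (_ : (p ^ 3 - 3 * p ^ 2) * (k - 1) ^ 3 <= _).
  by apply: Rmult_le_compat_l; lra.
by apply: Rmult_le_compat_r; lra.
Qed.

Lemma normalized_triples_bounds x y2 y3 :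
  r * (p * r - 1) / p <= y2 <= r ^ 2 -> 0 <= y3 <= r ^ 3 ->
  x <= a + p * ((p - 1) * (p - 2)) * y2 ^ 3 ->
  a + p * ((p - 1) * (p - 2)) * y2 ^ 3 <= x + p * (p * y2 ^ 3) +
    p * (p * (p * (p * (y3 * y3 * y2) + p * (y2 * y3 * y3) + p * (y3 * y2 * y3)
    + y3 * y2 * y2 + y2 * y3 * y2 + y2 * y2 * y3))) ->
  (a + b) * (1 - 10 * lam) <= x <= a + b.
Proof.
move=> [hy2l hy2u] hy3 hup hlow.
have hy20 : 0 <= y2.
  apply: Rle_trans hy2l; apply: Rmult_le_pos; [nra | apply/Rlt_le/Rinv_0_lt_compat; lra].
have := cycle_term_le (conj hy20 hy2u); have := cycle_term_ge hy2l.
have := pairs_term_le (conj hy20 hy2u); have := excess_term_le (conj hy20 hy2u) hy3.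
have := r_le_lam; have := a_gt0; have := b_gt0; have := lam_gt0.
split; nra.
Qed.

End Estimates.

Lemma INR_expn (m n : nat) : INR (m ^ n)%N = INR m ^ n.
Proof. by elim: n => [|n IH] //=; rewrite expnS mult_INR IH. Qed.

Lemma INR_subn (m n : nat) : (n <= m)%N -> INR (m - n)%N = INR m - INR n.
Proof. by move/leP; exact: minus_INR. Qed.

Lemma INR_leq (m n : nat) : (m <= n)%N -> INR m <= INR n.
Proof. by move/leP; exact: le_INR. Qed.

Lemma INR_leqRL (m n : nat) : INR m <= INR n -> (m <= n)%N.
Proof. by move/INR_le/leP. Qed.

Lemma ffact1 n : (n ^_ 1 = n)%N. Proof. by rewrite ffactnS ffactn0 muln1. Qed.
Lemma ffact2 n : (n ^_ 2 = n * (n - 1))%N. Proof. by rewrite ffactnS ffactnS ffactn0 muln1 subn1. Qed.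
Lemma ffact3 n : (n ^_ 3 = n * (n - 1) * (n - 2))%N.
Proof. by rewrite !ffactnSr ffactn0 subn0 mul1n. Qed.

Lemma ffact3_cross K P : (K <= P)%N -> (K ^_ 3 * P ^ 3 <= P ^_ 3 * K ^ 3)%N.
Proof.
move=> h; rewrite !ffact3.
have a1 : ((K - 1) * P <= (P - 1) * K)%N by nia.
have a2 : ((K - 2) * P <= (P - 2) * K)%N by nia.
have : (K * ((K - 1) * P) * ((K - 2) * P) * P <= K * ((P - 1) * K) * ((P - 2) * K) * P)%N.
  by apply: leq_mul => //; apply: leq_mul => //; apply: leq_mul.
by rewrite !expnS expn0; nia.
Qed.

Section ScaledCounts.
Variables P K : nat.
Hypotheses (hK1 : (1 <= K)%N) (hsmall : 20 * INR K ^ 2 <= INR P).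

Let k := INR K.
Let p := INR P.
Let C := INR 'C(P, K).
Let N s := INR (nsupsets P K s).

Lemma k_ge1 : 1 <= k.
Proof. exact: (INR_leq hK1). Qed.

Lemma p_ge20 : 20 <= p.
Proof. have := k_ge1; rewrite /p; move: hsmall; rewrite -/k; nra. Qed.

Lemma twoK_leq_P : (2 * K <= P)%N.
Proof. apply: INR_leqRL; rewrite mult_INR; have := k_ge1; move: hsmall; rewrite -/k -/p /=; nra. Qed.

Lemma K_leq_P : (K <= P)%N.
Proof. by apply: leq_trans twoK_leq_P; rewrite leq_pmull. Qed.

Lemma binomial_gt0 : 0 < C.
Proof. by apply: lt_0_INR; apply/ltP; rewrite bin_gt0 K_leq_P. Qed.

Lemma P_ge3 : (3 <= P)%N.
Proof. by apply: INR_leqRL; have := p_ge20; rewrite /p /=; lra. Qed.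

Lemma nsupsets1_eq : N 1%N = C * k / p.
Proof.
have := nsupsets_ffact 1 K_leq_P; rewrite !ffact1 => /(congr1 INR); rewrite !mult_INR -/C -/k -/p.
by move=> h; rewrite -h /N; field; have := p_ge20; lra.
Qed.

Lemma nsupsets2_eq : N 2%N = C * (k * (k - 1)) / (p * (p - 1)).
Proof.
have := nsupsets_ffact 2 K_leq_P; rewrite !ffact2 => /(congr1 INR).
rewrite !mult_INR !INR_subn ?(leq_trans _ P_ge3) // -/C -/k -/p INR_1 => h.
by rewrite -h /N; field; have := p_ge20; lra.
Qed.

Lemma nsupsets3_le : N 3%N * p ^ 3 <= C * k ^ 3.
Proof.
have hP : (0 < P ^_ 3)%N by rewrite ffact_gt0 P_ge3.
have : (nsupsets P K 3 * P ^ 3 <= 'C(P, K) * K ^ 3)%N.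
  rewrite -(leq_pmul2r hP) mulnAC nsupsets_ffact ?K_leq_P // -mulnA.
  by rewrite -mulnA leq_mul2l [X in (_ <= X)%N]mulnC ffact3_cross ?orbT ?K_leq_P.
by move/INR_leq; rewrite !mult_INR /N /C /k /p /=; lra.
Qed.

Lemma npairwise_meet_ratio_bounds :
  (k ^ 3 / p ^ 2 + k ^ 6 / p ^ 3) * (1 - 10 * (k ^ 2 / p))
  <= INR (npairwise_meet P K) / C ^ 3 <= k ^ 3 / p ^ 2 + k ^ 6 / p ^ 3.
Proof.
have hP : (2 <= P)%N by apply: leq_trans P_ge3.
have hup := INR_leq (npairwise_meet_le P K).
rewrite !plus_INR !mult_INR ?INR_expn !INR_subn ?(leq_trans _ hP) // in hup.
have hlow := INR_leq (npairwise_meet_ge P K).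
rewrite ?plus_INR ?mult_INR ?plus_INR ?mult_INR !INR_subn ?(leq_trans _ hP) // in hlow.
rewrite -/k -/p -/C -/(N 1%N) -/(N 2%N) -/(N 3%N) /= in hup hlow.
have hC := binomial_gt0; have hk := k_ge1; have hp := p_ge20.
have hC3 : 0 < C ^ 3 by apply: pow_lt.
set r := k / p; set y2 := N 2%N / C; set y3 := N 3%N / C; set x := INR _ / C ^ 3.
have er : k = p * r by rewrite /r; field; lra.
have eN1 : N 1%N = r * C by rewrite nsupsets1_eq /r; field; lra.
have eN2 : N 2%N = y2 * C by rewrite /y2; field; lra.
have eN3 : N 3%N = y3 * C by rewrite /y3; field; lra.
have eT : INR (npairwise_meet P K) = x * C ^ 3 by rewrite /x; field; lra.
have hy2 : y2 = k * (k - 1) / (p * (p - 1)) by rewrite /y2 nsupsets2_eq; field; nra.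
have hy3 : 0 <= y3 <= r ^ 3.
  split; first by apply: Rmult_le_pos; [exact: pos_INR | apply/Rlt_le/Rinv_0_lt_compat].
  apply: (Rmult_le_reg_r (C * p ^ 3)); first by apply: Rmult_lt_0_compat; [| apply: pow_lt]; lra.
  have -> : y3 * (C * p ^ 3) = N 3%N * p ^ 3 by rewrite /y3; field; lra.
  have -> : r ^ 3 * (C * p ^ 3) = C * k ^ 3 by rewrite /r; field; lra.
  exact: nsupsets3_le.
have [lo up] : (p * r ^ 3 + p ^ 3 * r ^ 6) * (1 - 10 * (p * r ^ 2)) <= x <= p * r ^ 3 + p ^ 3 * r ^ 6.
  apply: (@normalized_triples_bounds p r _ _ _ _ x y2 y3) => //.
  - by rewrite /r; apply: Rdiv_lt_0_compat; lra.
  - by rewrite -er.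
  - by move: hsmall; rewrite -/k -/p er; nra.
  - rewrite hy2 -er; split.
      apply: (Rmult_le_reg_r (p * p * (p - 1))); first nra.
      have -> : r * (k - 1) / p * (p * p * (p - 1)) = k * (k - 1) * (p - 1) by rewrite /r; field; lra.
      have -> : k * (k - 1) / (p * (p - 1)) * (p * p * (p - 1)) = k * (k - 1) * p by field; nra.
      nra.
    apply: (Rmult_le_reg_r (p * p * (p * (p - 1)))); first nra.
    have -> : k * (k - 1) / (p * (p - 1)) * (p * p * (p * (p - 1))) = k * (k - 1) * (p * p)
      by field; nra.
    have -> : r ^ 2 * (p * p * (p * (p - 1))) = k ^ 2 * (p * (p - 1)) by rewrite /r; field; lra.
    have hkp : 0 <= k * p * (p - k).
      by have := INR_leq K_leq_P; rewrite -/k -/p => ?; apply: Rmult_le_pos; nra.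
    nra.
  - apply: (Rmult_le_reg_r (C ^ 3)) => //; rewrite -eT.
    by apply: Rle_trans hup _; right; rewrite eN1 eN2; ring.
  - apply: (Rmult_le_reg_r (C ^ 3)) => //.
    move: hlow; rewrite eN1 eN2 eN3 eT => h.
    by eapply Rle_trans; [|eapply Rle_trans; [exact: h|]]; apply: Req_le; ring.
have ea : p * r ^ 3 = k ^ 3 / p ^ 2 by rewrite /r; field; lra.
have eb : p ^ 3 * r ^ 6 = k ^ 6 / p ^ 3 by rewrite /r; field; lra.
have el : p * r ^ 2 = k ^ 2 / p by rewrite /r; field; lra.
by rewrite -ea -eb -el.
Qed.

Lemma one_sub_q_bounds : k ^ 2 / p - (k ^ 2 / p) ^ 2 <= 1 - q K P <= k ^ 2 / p.
Proof.
have hC := binomial_gt0; have hk := k_ge1; have hp := p_ge20.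
have [A0 hA0] : exists A0 : {set 'I_P}, #|A0| = K.
  have : (0 < #|[set A : {set 'I_P} | keyring K A]|)%N by rewrite card_keyring bin_gt0 K_leq_P.
  by case/card_gt0P => A0; rewrite inE => /eqP; exists A0.
have e : 1 - q K P = INR (nmeeting K A0) / C.
  rewrite /q twoK_leq_P; have := congr1 INR (binomial_add_nmeeting hA0).
  rewrite plus_INR -/C => h.
  by rewrite (_ : INR (nmeeting K A0) = C - INR 'C(P - K, K)) -?/C; [field | lra]; lra.
have hup := INR_leq (nmeeting_le hA0); rewrite mult_INR -/k -/(N 1%N) in hup.
have hlow := INR_leq (nmeeting_ge hA0); rewrite !plus_INR !mult_INR -/k -/(N 1%N) -/(N 2%N) in hlow.
have hN2 : N 2%N <= C * (k / p) ^ 2.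
  rewrite nsupsets2_eq; apply: (Rmult_le_reg_r (p * p * (p - 1))); first nra.
  have -> : C * (k * (k - 1)) / (p * (p - 1)) * (p * p * (p - 1)) = C * (k * (k - 1) * p)
    by field; nra.
  have -> : C * (k / p) ^ 2 * (p * p * (p - 1)) = C * (k ^ 2 * (p - 1)) by field; lra.
  have hkp : 0 <= k * (p - k) by have := INR_leq K_leq_P; rewrite -/k -/p => ?; nra.
  by apply: Rmult_le_compat_l; nra.
rewrite e nsupsets1_eq in hup hlow *; split; apply: (Rmult_le_reg_r C) => //.
- have -> : INR (nmeeting K A0) / C * C = INR (nmeeting K A0) by field; lra.
  have : k * k * N 2%N <= k * k * (C * (k / p) ^ 2) by apply: Rmult_le_compat_l; nra.
  have -> : (k ^ 2 / p - (k ^ 2 / p) ^ 2) * C = k * (C * k / p) - k * k * (C * (k / p) ^ 2)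
    by field; lra.
  lra.
- have -> : INR (nmeeting K A0) / C * C = INR (nmeeting K A0) by field; lra.
  by have -> : k ^ 2 / p * C = k * (C * k / p) by field; lra.
Qed.

End ScaledCounts.

Lemma Un_cv_dominated (u e : nat -> R) (l l' c : R) : Un_cv e l ->
  (exists N, forall n, (N <= n)%coq_nat -> Rabs (u n - l') <= c * Rabs (e n - l)) -> Un_cv u l'.
Proof.
move=> he [N hN] eps heps.
have hc : 0 < Rmax c 1 by apply: Rlt_le_trans (Rmax_r _ _); lra.
have [N1 h1] := he (eps / Rmax c 1) (Rdiv_lt_0_compat _ _ heps hc).
exists (Nat.max N N1) => n hn; rewrite /R_dist.
have := h1 n (Nat.le_trans _ _ _ (Nat.le_max_r N N1) hn); rewrite /R_dist => hen.
apply: Rle_lt_trans (hN n (Nat.le_trans _ _ _ (Nat.le_max_l N N1) hn)) _.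
apply: Rle_lt_trans (_ : Rmax c 1 * Rabs (e n - l) < _).
  by apply: Rmult_le_compat_r; [apply: Rabs_pos | apply: Rmax_l].
have -> : eps = Rmax c 1 * (eps / Rmax c 1) by field; lra.
exact: Rmult_lt_compat_l.
Qed.

Lemma Un_cv_eventually_ext (u v : nat -> R) l : Un_cv u l ->
  (exists N, forall n, (N <= n)%coq_nat -> v n = u n) -> Un_cv v l.
Proof.
move=> hu [N hN] eps heps; have [N1 h1] := hu eps heps.
exists (Nat.max N N1) => n hn.
rewrite hN; last exact: (Nat.le_trans _ _ _ (Nat.le_max_l N N1) hn).
exact: h1 (Nat.le_trans _ _ _ (Nat.le_max_r N N1) hn).
Qed.

Lemma Rabs_inv_sub1_le w : Rabs (w - 1) < 1 / 2 -> Rabs (/ w - 1) <= 2 * Rabs (w - 1).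
Proof.
move=> hw1; have /Rabs_def2[h1 h2] := hw1.
have hw : 0 < w by lra.
have e : / w - 1 = (1 - w) / w by field; lra.
have ha := Rle_abs (w - 1); have hb : - (w - 1) <= Rabs (w - 1) by rewrite -Rabs_Ropp; apply: Rle_abs.
rewrite e; apply: Rabs_le; split; apply: (Rmult_le_reg_r w) => //;
  (have -> : (1 - w) / w * w = 1 - w by field; lra); nra.
Qed.

Lemma scale_small_of_dist K P : (0 < P)%N ->
  R_dist (INR K ^ 2 / INR P) 0 < 1 / 20 -> 20 * INR K ^ 2 <= INR P.
Proof.
move=> /ltP /lt_0_INR hP; rewrite /R_dist Rminus_0_r Rabs_right; last first.
  by apply/Rle_ge/Rmult_le_pos; [apply: pow_le; apply: pos_INR | apply/Rlt_le/Rinv_0_lt_compat].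
move=> h; apply: (Rmult_le_reg_r (/ INR P)); first exact: Rinv_0_lt_compat.
by rewrite Rinv_r; lra.
Qed.

Lemma ET_key_eq n K P : (3 <= n)%N -> (K <= P)%N ->
  ET_key n K P = INR 'C(n, 3) * (INR (npairwise_meet P K) / INR 'C(P, K) ^ 3).
Proof.
move=> hn hKP.
rewrite /ET_key sum_triangles_eq card_keyrings !mult_INR !INR_expn.
have hC : 0 < INR 'C(P, K) by apply: lt_0_INR; apply/ltP; rewrite bin_gt0.
rewrite -[in INR 'C(P, K) ^ n](subnK hn) pow_add.
by field; split; [lra | apply: pow_nonzero; lra].
Qed.

Section FixedScale.
Variables P K : nat.
Hypotheses (hK1 : (1 <= K)%N) (hsmall : 20 * INR K ^ 2 <= INR P).

Let k := INR K.
Let p := INR P.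
Let lam := k ^ 2 / p.
Let x := INR (npairwise_meet P K) / INR 'C(P, K) ^ 3.

(* [k^3/p^2 + k^6/p^3 = lam^3 (1 + p/k^3)] is the ER triangle density times the target ratio. *)
Let er3 := k ^ 3 / p ^ 2 + k ^ 6 / p ^ 3.

Lemma lam_range : 0 < lam <= 1 / 20.
Proof.
have hk : 1 <= k := k_ge1 hK1; have hs : 20 * k ^ 2 <= p := hsmall.
split; first by apply: Rdiv_lt_0_compat; nra.
apply: (Rmult_le_reg_r p); first nra.
have -> : lam * p = k ^ 2 by rewrite /lam; field; nra.
lra.
Qed.

Lemma er3_gt0 : 0 < er3.
Proof.
have hk : 1 <= k := k_ge1 hK1; have hp : 20 <= p := p_ge20 hK1 hsmall.
by apply: Rplus_lt_0_compat; apply: Rdiv_lt_0_compat; apply: pow_lt; lra.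
Qed.

Lemma triangle_density_close : Rabs (x / er3 - 1) <= 10 * Rabs (lam - 0).
Proof.
have [hl0 _] := lam_range; have he := er3_gt0.
have [lo up] := npairwise_meet_ratio_bounds hK1 hsmall; rewrite -/k -/p -/er3 -/x -/lam in lo up.
rewrite Rminus_0_r (Rabs_right lam); last lra.
have : 1 - 10 * lam <= x / er3 <= 1.
  split; apply: (Rmult_le_reg_r er3) => //; rewrite (_ : x / er3 * er3 = x); try (field; lra); lra.
by move=> h; apply: Rabs_le; lra.
Qed.

Lemma one_sub_q_gt0 : 0 < 1 - q K P.
Proof.
have [hl0 hl1] := lam_range.
by have [lo _] := one_sub_q_bounds hK1 hsmall; rewrite -/k -/p -/lam in lo; nra.
Qed.

Lemma edge_density_close : Rabs (lam / (1 - q K P) - 1) <= 2 * Rabs (lam - 0).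
Proof.
have [hl0 hl1] := lam_range.
have [lo up] := one_sub_q_bounds hK1 hsmall; rewrite -/k -/p -/lam in lo up.
have hQ := one_sub_q_gt0.
rewrite Rminus_0_r (Rabs_right lam); last lra.
have : 1 <= lam / (1 - q K P) <= 1 + 2 * lam.
  by split; apply: (Rmult_le_reg_r (1 - q K P)) => //;
    rewrite (_ : lam / (1 - q K P) * (1 - q K P) = lam); try (field; lra); nra.
by move=> h; apply: Rabs_le; lra.
Qed.

Lemma ET_ratio_factor n pn : (3 <= n)%N -> Rabs (pn / (1 - q K P) - 1) < 1 / 2 ->
  ET_key n K P / ET_er n pn / (1 + p / k ^ 3)
  = x / er3 * (lam / (1 - q K P) * (lam / (1 - q K P) * (lam / (1 - q K P))))
    * (/ (pn / (1 - q K P)) * (/ (pn / (1 - q K P)) * / (pn / (1 - q K P)))).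
Proof.
move=> hn /Rabs_def2[_ hw].
have hk : 1 <= k := k_ge1 hK1; have hp : 20 <= p := p_ge20 hK1 hsmall.
have [hl0 hl1] := lam_range.
have hQ := one_sub_q_gt0.
have hpn : 0 < pn.
  have : 0 < pn / (1 - q K P) * (1 - q K P) by apply: Rmult_lt_0_compat; lra.
  by rewrite /Rdiv Rmult_assoc Rinv_l ?Rmult_1_r; lra.
have hC : 0 < INR 'C(n, 3) by apply: lt_0_INR; apply/ltP; rewrite bin_gt0.
rewrite ET_key_eq ?(K_leq_P hK1 hsmall) // /ET_er -/x -/p -/k /er3 /lam.
have hk3 : 0 < k ^ 3 by apply: pow_lt; lra.
have hk6 : 0 < k ^ 6 by apply: pow_lt; lra.
by field; repeat split; nra.
Qed.

End FixedScale.

Theorem corollary1 (P K : nat -> nat) (p : nat -> R)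
  (hscal : forall n : nat, (1 <= K n)%N && (K n <= P n)%N)
  (hKP : Un_cv (fun n => INR (K n) ^ 2 / INR (P n)) 0)
  (hp01 : forall n : nat, 0 <= p n <= 1)
  (hp : Un_cv (fun n => p n / (1 - q (K n) (P n))) 1) :
  Un_cv (fun n => (ET_key n (K n) (P n) / ET_er n (p n))
                  / (1 + INR (P n) / INR (K n) ^ 3)) 1.
Proof.
pose lam n := INR (K n) ^ 2 / INR (P n).
pose x n := INR (npairwise_meet (P n) (K n)) / INR 'C(P n, K n) ^ 3
  / (INR (K n) ^ 3 / INR (P n) ^ 2 + INR (K n) ^ 6 / INR (P n) ^ 3).
pose w n := p n / (1 - q (K n) (P n)).
have [N1 hN1] := hKP (1 / 20) ltac:(lra).
have [N2 hN2] := hp (1 / 2) ltac:(lra).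
pose N0 := Nat.max (Nat.max N1 N2) 3.
have large n : (N0 <= n)%coq_nat ->
    [/\ (1 <= K n)%N, 20 * INR (K n) ^ 2 <= INR (P n), Rabs (w n - 1) < 1 / 2 & (3 <= n)%N].
  move=> hn; have /andP[hK1 hKPn] := hscal n.
  split => //; last by apply/leP; lia.
    by apply: scale_small_of_dist; [apply: leq_trans hKPn | apply: hN1; lia].
  by apply: hN2; lia.
have hx : Un_cv x 1.
  apply: (Un_cv_dominated (c := 10) hKP); exists N0 => n /large[hK1 hs _ _].
  exact: triangle_density_close.
have hlq : Un_cv (fun n => lam n / (1 - q (K n) (P n))) 1.
  apply: (Un_cv_dominated (c := 2) hKP); exists N0 => n /large[hK1 hs _ _].
  exact: edge_density_close.
have hwinv : Un_cv (fun n => / w n) 1.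
  apply: (Un_cv_dominated (c := 2) hp); exists N0 => n /large[_ _ hw _].
  exact: Rabs_inv_sub1_le.
have hall := CV_mult _ _ _ _ (CV_mult _ _ _ _ hx (CV_mult _ _ _ _ hlq (CV_mult _ _ _ _ hlq hlq)))
  (CV_mult _ _ _ _ hwinv (CV_mult _ _ _ _ hwinv hwinv)).
rewrite !Rmult_1_l in hall.
apply: (Un_cv_eventually_ext hall); exists N0 => n /large[hK1 hs hw hn].
exact: ET_ratio_factor.
Qed.
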